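(* Let $\{x_k\}$ be generated by the Subgradient-InexP method with the exogenous stepsize rule, under the standing assumptions, and let $\Omega:=\{x\in C: f(x)\le\inf_k f(x_k)\}$. If $\Omega\neq\varnothing$, then $\{x_k\}$ is quasi-Fejér convergent to $\Omega$; consequently $\{x_k\}$ is bounded.
   Context: A sequence $\{y_k\}\subset\mathbb{R}^n$ is quasi-Fejér convergent to a nonempty set $W$ if for every $w\in W$ there is $\{\delta_k\}$ with $\delta_k\ge0$, $\sum_k\delta_k<\infty$, and $\|y_{k+1}-w\|^2\le\|y_k-w\|^2+\delta_k$ for all $k$. Problem: minimize a convex $f:\mathbb{R}^n\to\mathbb{R}$ over a nonempty closed convex $C\subset\mathbb{R}^n$. For $\epsilon\ge0$, $\partial_\epsilon f(x):=\{s: f(y)\ge f(x)+\langle s,y-x\rangle-\epsilon\ \forall y\}$. Relative error tolerance function: any $\varphi_{\gamma,\theta,\lambda}:(\mathbb{R}^n)^3\to[0,\infty)$ with $\varphi_{\gamma,\theta,\lambda}(u,v,w)\le\gamma\|v-u\|^2+\theta\|w-v\|^2+\lambda\|w-u\|^2$; for $u\in C$, $\mathcal{P}_C(\varphi_{\gamma,\theta,\lambda},u,v):=\{w\in C:\langle v-w,z-w\rangle\le\varphi_{\gamma,\theta,\lambda}(u,v,w)\ \forall z\in C\}$. Subgradient-InexP method: $x_0\in C$; at iteration $k$, if $0\in\partial f(x_k)$ stop; otherwise choose nonzero $s_k\in\partial_{\epsilon_k}f(x_k)$, stepsize $t_k>0$, and $x_{k+1}\in\mathcal{P}_C(\varphi_{\gamma_k,\theta_k,\lambda_k},x_k,x_k-t_ks_k)$.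 Standing assumptions: $\gamma_k\in[0,\bar\gamma)$, $\theta_k\in[0,\bar\theta)$, $\lambda_k\in[0,\bar\lambda)$ with $\bar\gamma\ge0$, $\bar\theta,\bar\lambda\in[0,1/2)$; the sequence is infinite. Exogenous stepsize rule: $\mu\ge0$; $\{\alpha_k\}$, $\{\epsilon_k\}$ nonnegative, $\{\epsilon_k\}$ nonincreasing, $\sum_k\alpha_k=+\infty$, $\sum_k\alpha_k^2<+\infty$, $\epsilon_k\le\mu\alpha_k$; $t_k:=\alpha_k/\eta_k$, $\eta_k:=\max\{1,\|s_k\|\}$. *)

From HB Require Import structures.
From mathcomp Require Import all_boot all_order all_algebra.
From mathcomp Require Import all_classical all_reals all_analysis.
Set Implicit Arguments. Unset Strict Implicit. Unset Printing Implicit Defensive.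
Import Order.TTheory GRing.Theory Num.Theory.
Import numFieldNormedType.Exports.
Local Open Scope classical_set_scope.
Local Open Scope ring_scope.

Section Defs.
Variables (R : realType) (n : nat).
Notation vec := 'rV[R]_n.

Definition dotv (u v : vec) : R := \sum_(i < n) u ord0 i * v ord0 i.
Definition enorm2 (u : vec) : R := dotv u u.
Definition enorm (u : vec) : R := Num.sqrt (enorm2 u).

Definition convex_fun (f : vec -> R) : Prop :=
  forall (x y : vec) (l : R), 0 <= l -> l <= 1 ->
    f (l *: x + (1 - l) *: y) <= l * f x + (1 - l) * f y.

Definition convex_set_Rn (C : set vec) : Prop :=
  forall (x y : vec) (l : R), C x -> C y -> 0 <= l -> l <= 1 ->
    C (l *: x + (1 - l) *: y).

Definition eps_subdiff (f : vec -> R) (eps : R) (x : vec) : set vec :=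
  [set s | forall y : vec, f y >= f x + dotv s (y - x) - eps].
Definition subdiff (f : vec -> R) (x : vec) : set vec := eps_subdiff f 0 x.

Definition rel_err_tol (g th la : R) (phi : vec -> vec -> vec -> R) : Prop :=
  forall u v w : vec, 0 <= phi u v w /\
    phi u v w <= g * enorm2 (v - u) + th * enorm2 (w - v) + la * enorm2 (w - u).

Definition inexP (C : set vec) (phi : vec -> vec -> vec -> R) (u v : vec)
  : set vec :=
  [set w | C w /\ forall z : vec, C z -> dotv (v - w) (z - w) <= phi u v w].

Definition quasi_fejer (y : nat -> vec) (W : set vec) : Prop :=
  forall w : vec, W w ->
    exists delta : R ^nat, (forall k, 0 <= delta k) /\ cvgn (series delta) /\
      forall k, enorm2 (y k.+1 - w) <= enorm2 (y k - w) + delta k.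

Definition bounded_seq (y : nat -> vec) : Prop :=
  exists M : R, forall k, enorm (y k) <= M.

End Defs.

(* Write u = x_k, v = u - t_k s_k and w = x_(k+1) in P_C(phi, u, v).
   Testing the defining inequality <v - w, z - w> <= phi(u, v, w) twice,
   with the relative error bound on phi and Young's inequality, gives
   - with z := u, that the projected step is short:
     |w - u|^2 <= K1 |v - u|^2 for a constant K1 depending only on the
     tolerance parameters                          (inexP_step_bound);
   - with z in C, a Fejer-type estimate up to first-order and error terms
     |w - z|^2 <= |u - z|^2 + 2 <u - v, z - u> + O(|w - u|^2 + |v - u|^2)
                                                   (inexP_fejer).
   For z in Omega, the eps_k-subgradient inequality bounds the first-order
   term by 2 t_k eps_k <= 2 mu alpha_k^2, and the exogenous rule gives
   |v - u| <= alpha_k, so |x_(k+1) - z|^2 <= |x_k - z|^2 + K alpha_k^2 for a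
   constant K (subgradient_inexP_step).  Since sum alpha_k^2 < oo this is
   quasi-Fejer convergence, and quasi-Fejer sequences towards a nonempty set
   are bounded (quasi_fejer_bounded). *)

From HB Require Import structures.
From mathcomp Require Import all_boot all_order all_algebra.
From mathcomp Require Import all_classical all_reals all_analysis.
From mathcomp Require Import ring lra.
Import Order.TTheory GRing.Theory Num.Theory.
Import numFieldNormedType.Exports.
Set Implicit Arguments. Unset Strict Implicit. Unset Printing Implicit Defensive.
Local Open Scope classical_set_scope.
Local Open Scope ring_scope.

Section InnerProduct.
Variables (R : realType) (n : nat).
Implicit Types (u v z : 'rV[R]_n) (c : R).

Lemma dotvC u v : dotv u v = dotv v u.
Proof. by apply: eq_bigr => i _; rewrite mulrC. Qed.

Lemma dotvDl u v z : dotv (u + v) z = dotv u z + dotv v z.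
Proof. by rewrite /dotv -big_split; apply: eq_bigr => i _; rewrite !mxE mulrDl. Qed.

Lemma dotvZl c u z : dotv (c *: u) z = c * dotv u z.
Proof. by rewrite /dotv mulr_sumr; apply: eq_bigr => i _; rewrite !mxE mulrA. Qed.

Lemma dotvNl u z : dotv (- u) z = - dotv u z.
Proof. by rewrite -scaleN1r dotvZl mulN1r. Qed.

Lemma dotvDr u v z : dotv z (u + v) = dotv z u + dotv z v.
Proof. by rewrite dotvC dotvDl !(dotvC z). Qed.

Lemma dotvZr c u z : dotv z (c *: u) = c * dotv z u.
Proof. by rewrite dotvC dotvZl (dotvC u). Qed.

Lemma dotvNr u z : dotv z (- u) = - dotv z u.
Proof. by rewrite dotvC dotvNl (dotvC u). Qed.

Lemma enorm2_ge0 u : 0 <= enorm2 u.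
Proof. by rewrite sumr_ge0 // => i _; rewrite -expr2 sqr_ge0. Qed.

Lemma enorm2N u : enorm2 (- u) = enorm2 u.
Proof. by rewrite /enorm2 dotvNl dotvNr opprK. Qed.

Lemma enorm2D u v : enorm2 (u + v) = enorm2 u + 2 * dotv u v + enorm2 v.
Proof. by rewrite /enorm2 dotvDl !dotvDr (dotvC v u); ring. Qed.

Lemma enorm_sqr u : enorm u ^+ 2 = enorm2 u.
Proof. by rewrite sqr_sqrtr // enorm2_ge0. Qed.

(* Young's inequality, cleared of denominators: for c > 0,
   2 c <u, v> <= c^2 |u|^2 + |v|^2, since |c u - v|^2 >= 0. *)
Lemma young c u v : 0 < c -> c * (2 * dotv u v) <= c ^+ 2 * enorm2 u + enorm2 v.
Proof.
move=> _; have := enorm2_ge0 (c *: u - v).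
rewrite enorm2D enorm2N /enorm2 dotvZl dotvZr dotvNr dotvZl; lra.
Qed.

Lemma enorm2D_le u v : enorm2 (u + v) <= 2 * enorm2 u + 2 * enorm2 v.
Proof. by have := young u v (@ltr01 R); rewrite enorm2D; lra. Qed.

End InnerProduct.

Section InexactProjection.
Variables (R : realType) (n : nat).
Variables (C : set 'rV[R]_n) (phi : 'rV[R]_n -> 'rV[R]_n -> 'rV[R]_n -> R).

(* Testing the defining inequality of w with z := u bounds the length of the
   projected step d := w - u by that of the unprojected step p := u - v, for
   any margin 0 < a <= 1 - th - la. *)
Lemma inexP_step_bound (g th la a : R) (u v w : 'rV[R]_n) :
  rel_err_tol g th la phi -> 0 <= g -> 0 <= th -> th <= 1 / 2 ->
  0 < a -> a <= 1 - th - la -> C u -> inexP C phi u v w ->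
  a ^+ 2 * enorm2 (w - u) <= (2 * (g + th) * a + 1) * enorm2 (v - u).
Proof.
move=> phi_tol g0 th0 th_half a_gt0 a_le Cu [_ proj].
have [_ tol] := phi_tol u v w; move: (proj u Cu) tol.
set p := u - v; set d := w - u.
have -> : v - w = - (d + p) by apply/rowP => i; rewrite !mxE; ring.
have -> : u - w = - d by rewrite opprB.
have -> : w - v = d + p by apply/rowP => i; rewrite !mxE; ring.
have -> : v - u = - p by rewrite opprB.
clearbody p d.
rewrite enorm2D !enorm2N dotvNl dotvNr opprK dotvDl -/(enorm2 d) (dotvC p d).
move=> proj_u tol.
have := young (- d) p a_gt0; rewrite enorm2N dotvNl => yg.
move: (enorm2_ge0 d) (enorm2_ge0 p) => D0 X0.
have aD : a * enorm2 d <= (g + th) * enorm2 p - (1 - 2 * th) * dotv d p.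
  have : a * enorm2 d <= (1 - th - la) * enorm2 d by exact: ler_wpM2r.
  lra.
have {}aD := ler_wpM2l (ltW a_gt0) aD.
have [Y0|Yneg] := leP 0 (dotv d p).
  have : 0 <= (1 - 2 * th) * (a * dotv d p).
    by apply: mulr_ge0; [lra | exact: mulr_ge0 (ltW a_gt0) Y0].
  have : 0 <= a * ((g + th) * enorm2 p).
    by apply: mulr_ge0 (ltW a_gt0) (mulr_ge0 _ X0); lra.
  nra.
have : 0 <= th * (- (a * dotv d p)).
  by rewrite mulr_ge0 // oppr_ge0 pmulr_rle0 // ltW.
nra.
Qed.

(* Testing the defining inequality of w with an arbitrary z in C gives a
   Fejer-type estimate for the projected iterate, up to the first-order term
   <u - v, z - u> and the error terms |w - u|^2 and |v - u|^2; the cross term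
   <w - u, u - v> is absorbed by Young's inequality since th <= 1/2. *)
Lemma inexP_fejer (g th la : R) (u v w z : 'rV[R]_n) :
  rel_err_tol g th la phi -> th <= 1 / 2 -> C z -> inexP C phi u v w ->
  enorm2 (w - z) <= enorm2 (u - z) + 2 * dotv (u - v) (z - u)
                    + 2 * la * enorm2 (w - u) + (2 * g + 1) * enorm2 (v - u).
Proof.
move=> phi_tol th_half Cz [_ proj].
have [_ tol] := phi_tol u v w; move: (proj z Cz) tol.
set p := u - v; set d := w - u; set e := u - z.
have -> : v - w = - (d + p) by apply/rowP => i; rewrite !mxE; ring.
have -> : z - w = - (d + e) by apply/rowP => i; rewrite !mxE; ring.
have -> : w - z = d + e by apply/rowP => i; rewrite !mxE; ring.
have -> : z - u = - e by rewrite opprB.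
have -> : w - v = d + p by apply/rowP => i; rewrite !mxE; ring.
have -> : v - u = - p by rewrite opprB.
clearbody p d e.
rewrite !enorm2D !enorm2N !dotvNl !dotvNr opprK !dotvDl !dotvDr (dotvC p d).
rewrite -/(enorm2 d) => proj_z tol.
have := young (- d) p (@ltr01 R); rewrite enorm2N dotvNl expr1n !mul1r => yg.
have : 0 <= (1 - 2 * th) * (enorm2 d + enorm2 p + 2 * dotv d p).
  by apply: mulr_ge0; lra.
lra.
Qed.

End InexactProjection.

Section SubgradientStep.
Variables (R : realType) (n : nat).

Lemma exo_stepsize_bound (alpha : R) (s : 'rV[R]_n) : 0 <= alpha ->
  alpha / Num.max 1 (enorm s) <= alpha /\
  (alpha / Num.max 1 (enorm s)) ^+ 2 * enorm2 s <= alpha ^+ 2.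
Proof.
move=> alpha0; set eta := Num.max 1 (enorm s).
have eta1 : 1 <= eta by rewrite le_max lexx.
have eta_s : enorm s <= eta by rewrite le_max lexx orbT.
have eta0 : 0 < eta := lt_le_trans ltr01 eta1.
split; first by rewrite ler_pdivrMr // ler_peMr.
rewrite expr_div_n -enorm_sqr mulrAC ler_pdivrMr ?exprn_gt0 //.
by rewrite ler_wpM2l ?exprn_ge0 // lerXn2r ?nnegrE ?sqrtr_ge0 // ltW.
Qed.

(* The constant K with |x_{k+1} - w|^2 <= |x_k - w|^2 + K alpha_k^2 under the
   exogenous stepsize rule; a is the uniform margin 1 - tb - lb of the
   tolerance parameters. *)
Definition exo_const (gb tb lb mu : R) : R :=
  let a := 1 - tb - lb in (2 * (gb + tb) * a + 1) / a ^+ 2 + 2 * gb + 1 + 2 * mu.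

Lemma exo_const_ge0 (gb tb lb mu : R) :
  0 <= gb -> 0 <= tb -> tb + lb < 1 -> 0 <= mu -> 0 <= exo_const gb tb lb mu.
Proof.
move=> gb0 tb0 tblb mu0; have a_gt0 : 0 < 1 - tb - lb by lra.
have : 0 <= (2 * (gb + tb) * (1 - tb - lb) + 1) / (1 - tb - lb) ^+ 2.
  apply: divr_ge0; last exact: exprn_ge0 (ltW a_gt0).
  by apply: addr_ge0 => //; apply: mulr_ge0 (ltW a_gt0); lra.
rewrite /exo_const; lra.
Qed.

(* One iteration of Subgradient-InexP does not move away from a point z of C
   with f z <= f u, up to an error of order alpha^2: the first-order term is
   controlled by the eps-subgradient inequality, the error terms of the inexact
   projection by the step bound. *)
Lemma subgradient_inexP_step (f : 'rV[R]_n -> R) (C : set 'rV[R]_n)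
    (phi : 'rV[R]_n -> 'rV[R]_n -> 'rV[R]_n -> R)
    (g th la gb tb lb mu eps alpha t : R) (u s w z : 'rV[R]_n) :
  rel_err_tol g th la phi ->
  0 <= g -> g <= gb -> 0 <= th -> th <= tb -> la <= lb ->
  tb < 1 / 2 -> lb < 1 / 2 ->
  0 <= t -> t <= alpha -> t ^+ 2 * enorm2 s <= alpha ^+ 2 ->
  0 <= eps -> eps <= mu * alpha ->
  C u -> C z -> f z <= f u -> eps_subdiff f eps u s ->
  inexP C phi u (u - t *: s) w ->
  enorm2 (w - z) <= enorm2 (u - z) + exo_const gb tb lb mu * alpha ^+ 2.
Proof.
move=> tol g0 ggb th0 thtb lalb tb_half lb_half t0 t_alpha step_alpha eps0 eps_mu
  Cu Cz fzu sub proj.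
set a := 1 - tb - lb; have a_gt0 : 0 < a by rewrite /a; lra.
have alpha0 : 0 <= alpha := le_trans t0 t_alpha.
have vu : (u - t *: s) - u = - (t *: s) by rewrite addrAC subrr add0r.
have X_le : enorm2 (t *: s) <= alpha ^+ 2.
  by rewrite /enorm2 dotvZl dotvZr mulrA -expr2.
have first_order : 2 * dotv (u - (u - t *: s)) (z - u) <= 2 * mu * alpha ^+ 2.
  have subz := sub z.
  have -> : u - (u - t *: s) = t *: s by rewrite opprB addrC subrK.
  rewrite dotvZl.
  have : t * dotv s (z - u) <= t * eps by rewrite ler_wpM2l //; lra.
  have : t * eps <= alpha * (mu * alpha).
    by apply: ler_pM => //; rewrite ?(le_trans t0 t_alpha).
  rewrite mulrCA -expr2; lra.
have D_le : enorm2 (w - u) <= (2 * (gb + tb) * a + 1) / a ^+ 2 * alpha ^+ 2.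
  rewrite mulrAC ler_pdivlMr ?exprn_gt0 // mulrC.
  have := inexP_step_bound tol g0 th0 _ a_gt0 _ Cu proj.
  rewrite vu enorm2N => /(_ _ _)/le_trans; apply; [lra | rewrite /a; lra |].
  apply: le_trans (ler_wpM2r (enorm2_ge0 _) _) (ler_wpM2l _ X_le).
  - by rewrite lerD2r ler_wpM2r ?(ltW a_gt0) // ler_wpM2l // lerD.
  - by apply: addr_ge0 => //; rewrite !mulr_ge0 ?(ltW a_gt0) //; lra.
have := inexP_fejer tol _ Cz proj; rewrite vu enorm2N => /(_ _)/le_trans; apply; first lra.
have : 2 * la * enorm2 (w - u) <= enorm2 (w - u).
  by rewrite ler_piMl ?enorm2_ge0 //; lra.
have : (2 * g + 1) * enorm2 (t *: s) <= (2 * gb + 1) * alpha ^+ 2.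
  by apply: ler_pM; rewrite ?enorm2_ge0 //; lra.
rewrite /exo_const -/a; lra.
Qed.

End SubgradientStep.

(* A sequence that is quasi-Fejer convergent to a nonempty set is bounded:
   its distance to any point of the set is at most the initial distance plus
   the (finite) sum of the errors. *)
Lemma quasi_fejer_bounded (R : realType) (n : nat) (y : nat -> 'rV[R]_n)
    (W : set 'rV[R]_n) :
  W !=set0 -> quasi_fejer y W -> bounded_seq y.
Proof.
move=> [w Ww] /(_ w Ww) [delta [delta0 [delta_cvg fejer]]].
set S := limn (series delta).
have partial_le : forall k, series delta k <= S.
  apply: nondecreasing_cvgn_le => //.
  by apply: nondecreasing_series => m _ _; exact: delta0.
have dist_le : forall k, enorm2 (y k - w) <= enorm2 (y 0 - w) + S.
  suff telescope : forall k, enorm2 (y k - w) <= enorm2 (y 0 - w) + series delta k.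
    by move=> k; apply: le_trans (telescope k) _; rewrite lerD2l.
  elim=> [|k IH]; first by rewrite /series /= big_geq // addr0.
  by rewrite seriesSr; have := fejer k; lra.
exists (Num.sqrt (2 * (enorm2 (y 0 - w) + S) + 2 * enorm2 w)) => k.
rewrite /enorm ler_sqrt; last first.
  apply: addr_ge0; apply: mulr_ge0 => //; last exact: enorm2_ge0.
  exact: le_trans (enorm2_ge0 _) (dist_le k).
have := enorm2D_le (y k - w) w; rewrite subrK; have := dist_le k; lra.
Qed.

Theorem mainTheorem4 (R : realType) (n : nat)
  (f : 'rV[R]_n -> R) (C : set 'rV[R]_n)
  (x s : nat -> 'rV[R]_n) (t eps alpha eta gamma theta lambda : nat -> R)
  (phi : nat -> 'rV[R]_n -> 'rV[R]_n -> 'rV[R]_n -> R)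
  (gbar tbar lbar mu : R) :
  (* problem data *)
  convex_fun f -> closed C -> convex_set_Rn C -> C !=set0 ->
  (* standing assumptions *)
  0 <= gbar -> 0 <= tbar -> tbar < 1 / 2 -> 0 <= lbar -> lbar < 1 / 2 ->
  (forall k, 0 <= gamma k /\ gamma k < gbar) ->
  (forall k, 0 <= theta k /\ theta k < tbar) ->
  (forall k, 0 <= lambda k /\ lambda k < lbar) ->
  (forall k, rel_err_tol (gamma k) (theta k) (lambda k) (phi k)) ->
  (* Subgradient-InexP iteration (infinite sequence: never stops) *)
  C (x 0) ->
  (forall k, ~ subdiff f (x k) 0) ->
  (forall k, s k != 0 /\ eps_subdiff f (eps k) (x k) (s k)) ->
  (forall k, 0 < t k) ->
  (forall k, inexP C (phi k) (x k) (x k - t k *: s k) (x k.+1)) ->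
  (* exogenous stepsize rule *)
  0 <= mu ->
  (forall k, 0 <= alpha k) -> (forall k, 0 <= eps k) ->
  (forall k, eps k.+1 <= eps k) ->
  series alpha @ \oo --> +oo ->
  cvgn (series (fun k => alpha k ^+ 2)) ->
  (forall k, eps k <= mu * alpha k) ->
  (forall k, eta k = Num.max 1 (enorm (s k))) ->
  (forall k, t k = alpha k / eta k) ->
  (* conclusion *)
  let Omega := [set y | C y /\ forall k, f y <= f (x k)] in
  Omega !=set0 ->
  quasi_fejer x Omega /\ bounded_seq x.
Proof.
move=> _ _ _ _ gb0 tb0 tb_half _ lb_half hgamma htheta hlambda tol Cx0 _ hs t_gt0
  proj mu0 alpha0 eps0 _ _ sum_sq eps_mu heta ht Omega Omega_n0.
set K := exo_const gbar tbar lbar mu.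
have K0 : 0 <= K by apply: exo_const_ge0 => //; lra.
have Cx : forall k, C (x k) by case=> [//|k]; case: (proj k).
have fejer_step : forall w, Omega w -> forall k,
    enorm2 (x k.+1 - w) <= enorm2 (x k - w) + K * alpha k ^+ 2.
  move=> w [Cw fw] k.
  have [t_alpha step_alpha] := exo_stepsize_bound (s k) (alpha0 k).
  rewrite -heta -ht in t_alpha step_alpha.
  have [g0 /ltW ggb] := hgamma k; have [th0 /ltW thtb] := htheta k.
  have [_ /ltW lalb] := hlambda k.
  exact: subgradient_inexP_step (tol k) g0 ggb th0 thtb lalb tb_half lb_half
    (ltW (t_gt0 k)) t_alpha step_alpha (eps0 k) (eps_mu k) (Cx k) Cw (fw k)
    (hs k).2 (proj k).
have QF : quasi_fejer x Omega.
  move=> w Ow; exists (fun k => K * alpha k ^+ 2); split.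
    by move=> k; rewrite mulr_ge0 ?exprn_ge0.
  by split; [exact: is_cvg_seriesZ | exact: fejer_step].
by split; last exact: quasi_fejer_bounded Omega_n0 QF.
Qed.
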